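(* Let $G$ be an $N$-cube Adinkra with heights disregarded. Then $G$ is minimally vertex-transitive up to the bipartition: the only automorphism of $G$ fixing a vertex is the identity permutation, and $|\mathrm{Aut}(G)|=\tfrac12|V|=2^{N-1}$.
   Context: An Adinkra of dimension $N$ is a finite connected simple graph $G=(V,E)$ together with: (1) a bipartition of $V$ into bosons and fermions such that every edge joins a boson and a fermion; (2) a height function (here disregarded); (3) a coloring of $E$ by colors $\{1,\dots,N\}$ such that each vertex is incident to exactly one edge of each color; (4) an edge parity $\pi:E\to\mathbb{Z}_2$ (parity $1$ = dashed). These must satisfy: every path with edge colors $(i,j)$, $i\neq j$, lies in a unique 4-cycle with colors $(i,j,i,j)$, and every such two-colored 4-cycle has an odd number of dashed edges. An $N$-cube Adinkra has $2^N$ vertices. Switching a vertex reverses the parity of all edges incident to it. An automorphism of $G$ is a permutation of $V$ preserving adjacency, edge colors and the bipartition, which becomes parity-preserving after switching some set of vertices; automorphisms are identified when they induce the same permutation of $V$, and $\mathrm{Aut}(G)$ is the group of these permutations. *)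

From mathcomp Require Import all_boot all_fingroup.
Set Implicit Arguments. Unset Strict Implicit. Unset Printing Implicit Defensive.

Section Adinkra.
Variables (V : finType) (N : nat).
(* Graph data: adjacency relation, bipartition (boson = true, fermion = false),
   edge colouring by colours 'I_N, edge parity (true = dashed).
   col and pi are only meaningful on edges (adj u w). *)
Variables (adj : rel V) (boson : pred V) (col : V -> V -> 'I_N) (pi : V -> V -> bool).

Definition simple_graph : Prop := symmetric adj /\ irreflexive adj.

Definition graph_connected : Prop := forall u w, connect adj u w.

Definition bipartition_ok : Prop := forall u w, adj u w -> boson u != boson w.

Definition coloring_ok : Prop :=
  (forall u w, adj u w -> col u w = col w u) /\
  (forall (v : V) (i : 'I_N), exists! w, adj v w /\ col v w = i).

Definition parity_ok : Prop := forall u w, adj u w -> pi u w = pi w u.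

Definition square_condition : Prop :=
  forall (u v w : V) (i j : 'I_N), i != j ->
    adj u v -> adj v w -> col u v = i -> col v w = j ->
    exists! x, [/\ adj w x, col w x = i, adj x u & col x u = j].

Definition odd_dashing : Prop :=
  forall (u v w x : V) (i j : 'I_N), i != j ->
    adj u v -> adj v w -> adj w x -> adj x u ->
    col u v = i -> col v w = j -> col w x = i -> col x u = j ->
    odd (pi u v + pi v w + pi w x + pi x u).

Definition is_adinkra : Prop :=
  [/\ simple_graph, graph_connected, bipartition_ok, coloring_ok & parity_ok]
  /\ square_condition /\ odd_dashing.

Definition is_Ncube_adinkra : Prop := is_adinkra /\ #|V| = 2 ^ N.

(* Automorphism: permutation preserving adjacency, colours, the bipartition,
   and which becomes parity preserving after switching some vertex set S
   (switching S flips the parity of edge uw once for each endpoint in S). *)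
Definition is_aut (s : {perm V}) : bool :=
  [&& [forall u, forall w, adj (s u) (s w) == adj u w],
      [forall u, boson (s u) == boson u],
      [forall u, forall w, adj u w ==> (col (s u) (s w) == col u w)] &
      [exists S : {set V}, forall u, forall w,
         adj u w ==> (pi (s u) (s w) == (pi u w (+) (u \in S) (+) (w \in S)))]].

Definition AdinkraAut : {set {perm V}} := [set s | is_aut s].

End Adinkra.

From mathcomp Require Import all_boot all_fingroup.
Set Implicit Arguments. Unset Strict Implicit. Unset Printing Implicit Defensive.

(* The colour-i edges define commuting fixed-point-free involutions [flip i] of
   the vertices (square condition), and by connectivity V is one orbit of the
   group (Z/2)^N they generate; with 2^N vertices this orbit is regular, so the
   vertices get coordinates in the subsets of colours.  An automorphism
   commutes with every flip, hence is determined by the image of one vertex.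
   Conversely, a word of flips of even length preserves adjacency, colours and
   the bipartition, and the change of dashing it causes is a closed 1-cochain on
   the cube (every 2-coloured square is odd before and after); the cube has no
   first cohomology, so this cochain is a coboundary, i.e. a vertex switching.
   Thus Aut acts simply transitively on each of the two bipartition classes,
   which have 2^(N-1) elements. *)

Section AdinkraCube.

Variables (V : finType) (N : nat).
Variables (adj : rel V) (boson : pred V) (col : V -> V -> 'I_N) (pi : V -> V -> bool).

Hypothesis adj_sym : symmetric adj.
Hypothesis adj_connected : forall u w, connect adj u w.
Hypothesis adj_boson : forall u w, adj u w -> boson u != boson w.
Hypothesis col_sym : forall u w, adj u w -> col u w = col w u.
Hypothesis col_unique : forall (v : V) (i : 'I_N), exists! w, adj v w /\ col v w = i.
Hypothesis pi_sym : forall u w, adj u w -> pi u w = pi w u.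
Hypothesis square_closed : square_condition adj col.
Hypothesis square_odd : odd_dashing adj col pi.
Hypothesis card_cube : #|V| = 2 ^ N.

Definition flip (i : 'I_N) (v : V) : V :=
  odflt v [pick w | adj v w && (col v w == i)].

Lemma adj_col_flip i v : adj v (flip i v) /\ col v (flip i v) = i.
Proof.
rewrite /flip; case: pickP => [w /andP[vw /eqP] //| none].
have [w [[vw vwi] _]] := col_unique v i.
by move: (none w); rewrite vw vwi eqxx.
Qed.

Lemma adj_flip i v : adj v (flip i v). Proof. by case: (adj_col_flip i v). Qed.
Lemma col_flip i v : col v (flip i v) = i. Proof. by case: (adj_col_flip i v). Qed.

Lemma flip_col v w : adj v w -> flip (col v w) v = w.
Proof.
move=> vw; have [x [_ uniq_x]] := col_unique v (col v w).
by rewrite -(uniq_x _ (adj_col_flip _ v)) (uniq_x w).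
Qed.

Lemma flipK i : involutive (flip i).
Proof.
move=> v; have adj_fv : adj (flip i v) v by rewrite adj_sym adj_flip.
by rewrite -{1}(col_flip i v) col_sym ?adj_flip ?flip_col.
Qed.

Lemma flip_inj i : injective (flip i). Proof. exact: inv_inj (flipK i). Qed.

Lemma flipC i j v : flip i (flip j v) = flip j (flip i v).
Proof.
have [-> // | neq_ij] := eqVneq i j.
have [x [[ex_adj ex_col xv_adj xv_col] _]] :=
  square_closed neq_ij (adj_flip i v) (adj_flip j _) (col_flip i v) (col_flip j _).
have -> : flip j v = x by rewrite -xv_col col_sym ?flip_col // adj_sym.
set w := flip j _ in ex_adj ex_col *.
by rewrite -ex_col col_sym ?flip_col // adj_sym.
Qed.

Lemma boson_flip i v : boson (flip i v) = ~~ boson v.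
Proof. by have := adj_boson (adj_flip i v); case: (boson v); case: (boson _). Qed.

Definition flips (s : seq 'I_N) (v : V) : V := foldr flip v s.

Lemma flips_morph (f : V -> V) :
  (forall i, {morph f : v / flip i v}) -> forall s, {morph f : v / flips s v}.
Proof. by move=> f_flip s v; elim: s => //= i s <-; rewrite f_flip. Qed.

Lemma flip_flips i s v : flip i (flips s v) = flips s (flip i v).
Proof. by apply: flips_morph => j w; rewrite flipC. Qed.

Lemma flips_inj s : injective (flips s).
Proof. by elim: s => //= i s IHs v w /flip_inj /IHs. Qed.

Lemma boson_flips s v : boson (flips s v) = boson v (+) odd (size s).
Proof. by elim: s => [|i s IHs] /=; rewrite ?addbF // boson_flip IHs addbN. Qed.

Lemma connect_flips u w : exists s, w = flips s u.
Proof.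
have /connectP[p] := adj_connected u w; elim: p u => [|x p IHp] u /=.
  by move=> _ ->; exists [::].
case/andP=> ux /IHp/[apply] -[s ->]; exists (rcons s (col u x)).
by rewrite /flips foldr_rcons flip_col.
Qed.

Definition toggle (X : {set 'I_N}) (i : 'I_N) : {set 'I_N} :=
  [set k | (k \in X) (+) (k == i)].

Lemma flip_flips_filter (X : {set 'I_N}) i l v : uniq l -> i \in l ->
  flip i (flips [seq k <- l | k \in X] v) = flips [seq k <- l | k \in toggle X i] v.
Proof.
elim: l => //= j l IHl /andP[jNl l_uniq]; rewrite inE [j \in toggle X i]inE.
have [ij _ | neq_ji /= il] := eqVneq i j.
  subst j.
  have -> : [seq k <- l | k \in toggle X i] = [seq k <- l | k \in X].
    apply: eq_in_filter => k kl; rewrite inE.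
    by have [ki|_] := eqVneq k i; [rewrite -ki kl in jNl | rewrite addbF].
  by case: (i \in X) => /=; rewrite ?flipK.
rewrite addbF; case: (j \in X) => /=; rewrite -IHl //.
exact: flipC.
Qed.

Definition cube_vertex (v0 : V) (X : {set 'I_N}) : V :=
  flips [seq k <- enum 'I_N | k \in X] v0.

Lemma flip_cube_vertex v0 X i :
  flip i (cube_vertex v0 X) = cube_vertex v0 (toggle X i).
Proof. by rewrite flip_flips_filter ?enum_uniq ?mem_enum. Qed.

Lemma cube_vertex_onto v0 w : w \in codom (cube_vertex v0).
Proof.
have [s ->] := connect_flips v0 w; elim: s => [|i s] /=.
  apply/codomP; exists set0; rewrite /cube_vertex.
  by rewrite (eq_filter (a2 := pred0)) ?filter_pred0 // => k; rewrite inE.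
by case/codomP=> X ->; rewrite flip_cube_vertex codom_f.
Qed.

Lemma card_cube_sets : #|{set 'I_N}| = #|V|.
Proof. by rewrite card_cube -cardsT -powersetT card_powerset cardsT card_ord. Qed.

Lemma cube_vertex_bij v0 : bijective (cube_vertex v0).
Proof.
have onto_card : #|codom (cube_vertex v0)| = #|{set 'I_N}|.
  by rewrite card_cube_sets; apply: eq_card => w; rewrite cube_vertex_onto.
have /image_injP inj : #|image (cube_vertex v0) {set 'I_N}| == #|{set 'I_N}|.
  by rewrite onto_card.
by apply: inj_card_bij; [exact: in2T | rewrite card_cube_sets].
Qed.

Lemma cube_coordinates (v0 : V) :
  exists coord : V -> {set 'I_N}, forall i v, coord (flip i v) = toggle (coord v) i.
Proof.
have [coord vertexK coordK] := cube_vertex_bij v0; exists coord => i v.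
by apply: (can_inj vertexK); rewrite -flip_cube_vertex !coordK.
Qed.

Definition square_sum (d : V -> 'I_N -> bool) (i j : 'I_N) (v : V) : bool :=
  d v i (+) d (flip i v) j (+) d (flip j (flip i v)) i (+) d (flip j v) j.

Lemma square_sum_addb d d' i j v :
  square_sum (fun x k => d x k (+) d' x k) i j v
  = square_sum d i j v (+) square_sum d' i j v.
Proof.
by rewrite /square_sum (addbACA (d v i)) (addbACA (d v i (+) _)) (addbACA (d v i (+) _ (+) _)).
Qed.

Section ClosedCochain.

Variable d : V -> 'I_N -> bool.
Hypothesis d_flip : forall i v, d (flip i v) i = d v i.
Hypothesis d_square : forall i j v, i != j -> square_sum d i j v = false.
Variable coord : V -> {set 'I_N}.
Hypothesis coord_flip : forall i v, coord (flip i v) = toggle (coord v) i.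

Definition exact_below (k : nat) (S : {set V}) : Prop :=
  forall v (i : 'I_N), i < k -> d v i = (v \in S) (+) (flip i v \in S).

Lemma exact_below_succ (K : 'I_N) S : exact_below K S -> exists S', exact_below K.+1 S'.
Proof.
move=> exS; pose e v := d v K (+) (v \in S) (+) (flip K v \in S).
have e_flipK v : e (flip K v) = e v.
  by rewrite /e flipK d_flip -!addbA [(_ \in S) (+) _]addbC.
have e_flip (i : 'I_N) v : i < K -> e (flip i v) = e v.
  move=> ltiK; have neq_iK : i != K by rewrite neq_ltn ltiK.
  have := d_square v neq_iK; rewrite /square_sum flipC d_flip (d_flip K) /e.
  rewrite (exS v i ltiK) (exS (flip K v) i ltiK) flipC.
  move: (d v K) (d (flip i v) K) (v \in S) (flip i v \in S) (flip K v \in S).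
  by move: (flip K (flip i v) \in S); do 6!case.
(* Switch, in the half-cube [K \in coord v], the vertices where the residual
   [e] is set; [e] is invariant under flips of colours <= K, so the colours
   below K are unaffected. *)
exists [set v | (v \in S) (+) (K \in coord v) && e v] => v i.
rewrite ltnS leq_eqVlt => /orP[/eqP/val_inj-> | ltiK]; rewrite !inE coord_flip !inE.
  rewrite eqxx addbT e_flipK /e.
  by move: (K \in coord v) (d v K) (v \in S) (flip K v \in S); do 4!case.
have neq_Ki : K != i by rewrite neq_ltn ltiK orbT.
rewrite (negPf neq_Ki) addbF e_flip // (exS v i ltiK).
by move: (K \in coord v) (e v) (v \in S) (flip i v \in S); do 4!case.
Qed.

Lemma closed_cochain_exact :
  exists S : {set V}, forall i v, d v i = (v \in S) (+) (flip i v \in S).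
Proof.
suff /(_ N (leqnn N))[S exS] : forall k, k <= N -> exists S, exact_below k S.
  by exists S => i v; exact: exS.
elim=> [_ | k IHk ltkN]; first by exists set0.
by have [S] := IHk (ltnW ltkN); exact: (@exact_below_succ (Ordinal ltkN)).
Qed.

End ClosedCochain.

Definition dashing (v : V) (i : 'I_N) : bool := pi v (flip i v).

Lemma dashing_flip i v : dashing (flip i v) i = dashing v i.
Proof. by rewrite /dashing flipK pi_sym // adj_sym adj_flip. Qed.

Lemma dashing_square i j v : i != j -> square_sum dashing i j v.
Proof.
move=> neq_ij; have adj_ji_j : adj (flip j (flip i v)) (flip j v).
  by rewrite flipC adj_sym adj_flip.
have := square_odd neq_ij (adj_flip i v) (adj_flip j _) adj_ji_j
  (_ : adj (flip j v) v) (col_flip i v) (col_flip j _).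
have flip_iji : flip i (flip j (flip i v)) = flip j v by rewrite flipC flipK.
rewrite /square_sum /dashing flip_iji flipK !oddD !oddb.
apply; first by rewrite adj_sym adj_flip.
  by rewrite flipC col_sym ?col_flip // adj_sym adj_flip.
by rewrite col_sym ?col_flip // adj_sym adj_flip.
Qed.

Section FlipMorphism.

Variable t : V -> V.
Hypothesis t_flip : forall i, {morph t : v / flip i v}.

Lemma flip_morph_eq (t' : V -> V) v :
  (forall i, {morph t' : x / flip i x}) -> t v = t' v -> t =1 t'.
Proof.
move=> t'_flip eq_v w; have [s ->] := connect_flips v w.
by rewrite (flips_morph t_flip) (flips_morph t'_flip) eq_v.
Qed.

Lemma adj_flip_morph : injective t -> forall u w, adj (t u) (t w) = adj u w.
Proof.
move=> t_inj u w; apply/idP/idP => [/flip_col | /flip_col <-]; last first.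
  by rewrite t_flip adj_flip.
by rewrite -t_flip => /t_inj <-; exact: adj_flip.
Qed.

Lemma col_flip_morph u w : adj u w -> col (t u) (t w) = col u w.
Proof. by move/flip_col <-; rewrite t_flip !col_flip. Qed.

Lemma flip_morph_switching : exists S : {set V},
  forall u w, adj u w -> pi (t u) (t w) = pi u w (+) (u \in S) (+) (w \in S).
Proof.
have /card_gt0P[v0 _] : 0 < #|V| by rewrite card_cube expn_gt0.
have [coord coord_flip] := cube_coordinates v0.
pose d v i := dashing (t v) i (+) dashing v i.
have d_flip i v : d (flip i v) i = d v i by rewrite /d t_flip !dashing_flip.
have d_square i j v : i != j -> square_sum d i j v = false.
  move=> neq_ij; have sq_t : square_sum (fun x => dashing (t x)) i j v
                            = square_sum dashing i j (t v).
    by rewrite /square_sum !t_flip.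
  by rewrite square_sum_addb sq_t !dashing_square.
have [S exS] := closed_cochain_exact d_flip d_square coord_flip.
exists S => u w /flip_col <-; have := exS (col u w) u.
by rewrite /d /dashing t_flip -addbA => <-; rewrite addbCA addbb addbF.
Qed.

End FlipMorphism.

Local Notation Aut := (AdinkraAut adj boson col pi).

Lemma aut_flip s : is_aut adj boson col pi s -> forall i, {morph s : v / flip i v}.
Proof.
case/and4P=> /forallP s_adj _ /forallP s_col _ i v.
have adj_s : adj (s v) (s (flip i v)) by rewrite (eqP (forallP (s_adj v) _)) adj_flip.
have col_s : col (s v) (s (flip i v)) = i.
  by rewrite (eqP (implyP (forallP (s_col v) _) (adj_flip i v))) col_flip.
by rewrite -(flip_col adj_s) col_s.
Qed.

Lemma flips_perm_aut s : ~~ odd (size s) -> is_aut adj boson col pi (perm (@flips_inj s)).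
Proof.
move=> even_s; set t := perm _.
have t_flip i : {morph t : v / flip i v} by move=> v; rewrite !permE flip_flips.
have [S switchS] := flip_morph_switching t_flip.
apply/and4P; split.
- by apply/forallP=> u; apply/forallP=> w; rewrite adj_flip_morph //; exact: perm_inj.
- by apply/forallP=> u; rewrite permE boson_flips (negPf even_s) addbF.
- by apply/forallP=> u; apply/forallP=> w; apply/implyP=> uw; rewrite col_flip_morph.
- apply/existsP; exists S; apply/forallP=> u; apply/forallP=> w.
  by apply/implyP=> uw; rewrite switchS.
Qed.

Lemma aut_transitive u w : boson u = boson w -> exists2 s, s \in Aut & s u = w.
Proof.
have [s ->] := connect_flips u w; rewrite boson_flips => eq_b.
have even_s : ~~ odd (size s) by move: eq_b; case: (boson u); case: odd.
by exists (perm (@flips_inj s)); rewrite ?inE ?flips_perm_aut ?permE.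
Qed.

Lemma aut_fix1 s v : s \in Aut -> s v = v -> s = 1%g.
Proof.
rewrite inE => /aut_flip s_flip fix_v; apply/permP => w; rewrite perm1.
exact: (flip_morph_eq s_flip (t' := id) (fun _ _ => erefl) fix_v).
Qed.

Lemma card_aut : 0 < N -> #|Aut| = 2 ^ N.-1.
Proof.
move=> N_gt0; have /card_gt0P[v0 _] : 0 < #|V| by rewrite card_cube expn_gt0.
pose B := [set w | boson w == boson v0].
have orbit_v0 : [set (s : {perm V}) v0 | s in Aut] = B.
  apply/setP=> w; rewrite inE; apply/imsetP/eqP => [[s] | /esym/aut_transitive[s]].
    by rewrite inE => /and4P[_ /forallP s_boson _ _] ->; exact/eqP.
  by exists s.
set i0 := Ordinal N_gt0.
have flip_B : flip i0 @: B = ~: B.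
  apply/setP=> w; rewrite -[w](flipK i0) mem_imset; last exact: flip_inj.
  by rewrite !inE flipK boson_flip; case: (boson w); case: (boson v0).
have card_B : #|B| = 2 ^ N.-1.
  apply/double_inj; rewrite -addnn -mul2n -expnS prednK // -card_cube -(cardsC B).
  by rewrite -flip_B card_imset //; exact: flip_inj.
rewrite -card_B -orbit_v0 card_in_imset // => s s'.
rewrite !inE => /aut_flip s_flip /aut_flip s'_flip eq_v0; apply/permP.
exact: flip_morph_eq s'_flip eq_v0.
Qed.

End AdinkraCube.

Theorem mainTheorem4 (V : finType) (N : nat) (adj : rel V) (boson : pred V)
    (col : V -> V -> 'I_N) (pi : V -> V -> bool) :
  0 < N ->
  is_Ncube_adinkra adj boson col pi ->
  [/\ (forall u w : V, boson u = boson w ->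
         exists2 s, s \in AdinkraAut adj boson col pi & s u = w),
      (forall s : {perm V}, s \in AdinkraAut adj boson col pi ->
         forall v : V, s v = v -> s = 1%g)
    & #|AdinkraAut adj boson col pi| = 2 ^ N.-1].
Proof.
move=> N_gt0 [[[[adj_sym _] adj_conn adj_boson [col_sym col_unique] pi_sym]]].
move=> [square_closed square_odd] card_V.
split=> [u w | s s_aut v |]; [exact: aut_transitive | exact: aut_fix1 s_aut | exact: card_aut].
Qed.
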